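(* Let $S$ be an intra-regular $\Gamma$-AG$^{**}$-groupoid and let $I_s$ be the set of all two-sided $\Gamma$-ideals of $S$. Then for $A,B\in I_s$ we have $A\Gamma B\in I_s$, and $(I_s,\ (A,B)\mapsto A\Gamma B)$ is a semilattice: the operation is commutative, associative and idempotent ($A\Gamma B=B\Gamma A$, $(A\Gamma B)\Gamma C=A\Gamma(B\Gamma C)$, $A\Gamma A=A$).
   Context: Let $S$ and $\Gamma$ be nonempty sets with a map $S\times\Gamma\times S\to S$, $(x,\gamma,y)\mapsto x\gamma y$. $S$ is a $\Gamma$-AG-groupoid if $(x\gamma y)\delta z=(z\gamma y)\delta x$ for all $x,y,z\in S$, $\gamma,\delta\in\Gamma$; it is a $\Gamma$-AG$^{**}$-groupoid if moreover $a\alpha(b\beta c)=b\alpha(a\beta c)$ for all $a,b,c\in S$, $\alpha,\beta\in\Gamma$. For subsets $A,B\subseteq S$, $A\Gamma B=\{a\gamma b: a\in A,\gamma\in\Gamma,b\in B\}$. $S$ is intra-regular if for every $a\in S$ there exist $x,y\in S$ and $\beta,\gamma,\delta\in\Gamma$ with $a=(x\beta(a\delta a))\gamma y$. A nonempty subset $A$ is a two-sided $\Gamma$-ideal if $S\Gamma A\subseteq A$ and $A\Gamma S\subseteq A$. *)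

Set Implicit Arguments.

Section GammaDefs.
Variables (S G : Type) (op : S -> G -> S -> S).

Definition is_GammaAG : Prop :=
  forall (x y z : S) (g d : G), op (op x g y) d z = op (op z g y) d x.

Definition is_GammaAGss : Prop :=
  is_GammaAG /\
  forall (a b c : S) (al be : G), op a al (op b be c) = op b al (op a be c).

Definition intra_regular : Prop :=
  forall a : S, exists (x y : S) (be ga de : G),
    a = op (op x be (op a de a)) ga y.

Definition GProd (A B : S -> Prop) : S -> Prop :=
  fun s => exists a g b, A a /\ B b /\ s = op a g b.

Definition set_incl (A B : S -> Prop) : Prop := forall x, A x -> B x.
Definition set_eq (A B : S -> Prop) : Prop := forall x, A x <-> B x.

Definition full : S -> Prop := fun _ => True.

Definition two_sided_ideal (A : S -> Prop) : Prop :=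
  (exists a, A a) /\
  set_incl (GProd full A) A /\ set_incl (GProd A full) A.
End GammaDefs.

(* In an intra-regular Γ-AG**-groupoid every a can be written a = p γ a with p
   in S Γ (S Γ a), so any left ideal containing a also contains such a p.
   Consequently the product A Γ B of two ideals is exactly A ∩ B, and the
   semilattice laws for Γ-products become those of intersection. *)
From Stdlib Require Import Setoid.

Section GammaIdeals.
Set Implicit Arguments.
Unset Strict Implicit.
Variables (S G : Type) (op : S -> G -> S -> S).

Definition left_ideal (A : S -> Prop) : Prop := set_incl (GProd op (@full S) A) A.
Definition right_ideal (A : S -> Prop) : Prop := set_incl (GProd op A (@full S)) A.
Definition inter (A B : S -> Prop) : S -> Prop := fun x => A x /\ B x.

Lemma left_ideal_op A x g a : left_ideal A -> A a -> A (op x g a).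
Proof. intros HA Ha. apply HA. exists x, g, a. repeat split; auto. Qed.

Lemma right_ideal_op A a g x : right_ideal A -> A a -> A (op a g x).
Proof. intros HA Ha. apply HA. exists a, g, x. repeat split; auto. Qed.

Lemma two_sided_ideal_left A : two_sided_ideal op A -> left_ideal A.
Proof. intros [_ [HL _]]. exact HL. Qed.

Lemma two_sided_ideal_right A : two_sided_ideal op A -> right_ideal A.
Proof. intros [_ [_ HR]]. exact HR. Qed.

Lemma two_sided_ideal_set_eq A B :
  set_eq A B -> two_sided_ideal op A -> two_sided_ideal op B.
Proof.
  intros AB [[a Ha] [HL HR]]. split; [|split].
  - exists a. apply AB, Ha.
  - intros x [y [g [b [_ [Hb ->]]]]].
    apply AB, left_ideal_op; [exact HL | apply AB, Hb].
  - intros x [b [g [y [Hb [_ ->]]]]].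
    apply AB, right_ideal_op; [exact HR | apply AB, Hb].
Qed.

Lemma two_sided_ideal_inter (g0 : G) A B :
  two_sided_ideal op A -> two_sided_ideal op B -> two_sided_ideal op (inter A B).
Proof.
  intros HA HB. split; [|split].
  - destruct (proj1 HA) as [a Ha], (proj1 HB) as [b Hb].
    exists (op a g0 b). split.
    + apply right_ideal_op; auto using two_sided_ideal_right.
    + apply left_ideal_op; auto using two_sided_ideal_left.
  - intros x [y [g [v [_ [[Hva Hvb] ->]]]]]. split;
      apply left_ideal_op; auto using two_sided_ideal_left.
  - intros x [v [g [y [[Hva Hvb] [_ ->]]]]]. split;
      apply right_ideal_op; auto using two_sided_ideal_right.
Qed.

Lemma GProd_sub_inter A B :
  right_ideal A -> left_ideal B -> set_incl (GProd op A B) (inter A B).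
Proof.
  intros HA HB x [a [g [b [Ha [Hb ->]]]]]. split.
  - apply right_ideal_op; assumption.
  - apply left_ideal_op; assumption.
Qed.

Section IntraRegular.
Hypothesis HAG : is_GammaAGss op.
Hypothesis Hir : intra_regular op.

Lemma intra_regular_factor a : exists x y be de ga,
  a = op (op y be (op x de a)) ga a.
Proof.
  destruct HAG as [Hleft Hmed].
  destruct (Hir a) as [x [y [be [ga [de E]]]]].
  exists x, y, be, de, ga.
  (* a = (x β (a δ a)) γ y = (a β (x δ a)) γ y = (y β (x δ a)) γ a *)
  rewrite (Hmed x a a be de), (Hleft a (op x de a) y be ga) in E.
  exact E.
Qed.

Lemma left_ideal_factor A a : left_ideal A -> A a ->
  exists p g, A p /\ a = op p g a.
Proof.
  intros HA Ha. destruct (intra_regular_factor a) as [x [y [be [de [ga E]]]]].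
  exists (op y be (op x de a)), ga. split; [|exact E].
  apply left_ideal_op, left_ideal_op; assumption.
Qed.

Lemma GProd_ideal_inter A B :
  two_sided_ideal op A -> left_ideal B -> set_eq (GProd op A B) (inter A B).
Proof.
  intros HA HB x. split.
  - apply GProd_sub_inter; auto using two_sided_ideal_right.
  - intros [Ha Hb].
    destruct (left_ideal_factor (two_sided_ideal_left HA) Ha) as [p [g [Hp E]]].
    exists p, g, x. auto.
Qed.

Lemma GProd_ideals_inter A B :
  two_sided_ideal op A -> two_sided_ideal op B -> set_eq (GProd op A B) (inter A B).
Proof. intros HA HB. apply GProd_ideal_inter; auto using two_sided_ideal_left. Qed.

Lemma GProd_ideals_ideal (g0 : G) A B :
  two_sided_ideal op A -> two_sided_ideal op B -> two_sided_ideal op (GProd op A B).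
Proof.
  intros HA HB. apply (two_sided_ideal_set_eq (A := inter A B)).
  - intros x. symmetry. apply GProd_ideals_inter; assumption.
  - apply two_sided_ideal_inter; assumption.
Qed.

End IntraRegular.
End GammaIdeals.

Theorem mainTheorem19 (S G : Type) (op : S -> G -> S -> S)
  (s0 : S) (g0 : G)
  (HAG : is_GammaAGss op) (Hir : intra_regular op) :
  (forall A B, two_sided_ideal op A -> two_sided_ideal op B ->
     two_sided_ideal op (GProd op A B)) /\
  (forall A B, two_sided_ideal op A -> two_sided_ideal op B ->
     set_eq (GProd op A B) (GProd op B A)) /\
  (forall A B C, two_sided_ideal op A -> two_sided_ideal op B ->
     two_sided_ideal op C ->
     set_eq (GProd op (GProd op A B) C) (GProd op A (GProd op B C))) /\
  (forall A, two_sided_ideal op A -> set_eq (GProd op A A) A).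
Proof.
  pose proof (GProd_ideals_ideal HAG Hir g0) as prod_ideal.
  pose proof (GProd_ideals_inter HAG Hir) as prod_inter.
  split; [exact prod_ideal|]. split; [|split].
  - intros A B HA HB x.
    rewrite (prod_inter A B HA HB x), (prod_inter B A HB HA x). unfold inter. tauto.
  - intros A B C HA HB HC x.
    rewrite (prod_inter _ C (prod_ideal A B HA HB) HC x),
      (prod_inter A _ HA (prod_ideal B C HB HC) x).
    unfold inter. rewrite (prod_inter A B HA HB x), (prod_inter B C HB HC x).
    unfold inter. tauto.
  - intros A HA x. rewrite (prod_inter A A HA HA x). unfold inter. tauto.
Qed.
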